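(* Let $K$ be a field and let $f\colon\mathbb Z^k\to K$ be a hypergeometric term on $\mathbb Z^k$ that is a zero divisor. Then for each $\vec v\in\mathbb Z^k$ there exist nonzero polynomials $A_{\vec v},B_{\vec v}\in K[z_1,\dots,z_k]$ such that $A_{\vec v}f=B_{\vec v}f^{\vec v}$ (pointwise on $\mathbb Z^k$), and the rational functions $R_{\vec v}=A_{\vec v}/B_{\vec v}$ satisfy $R_{\vec v}R_{\vec w}^{\vec v}=R_{\vec w}R_{\vec v}^{\vec w}$ for all $\vec v,\vec w\in\mathbb Z^k$.
   Context: For a function or rational function $g$ on $\mathbb Z^k$ and $\vec v\in\mathbb Z^k$, $g^{\vec v}(\vec z)=g(\vec z+\vec v)$. A hypergeometric term on $\mathbb Z^k$ over $K$ is a function $f\colon\mathbb Z^k\to K$ such that for each $i\in\{1,\dots,k\}$ there are nonzero polynomials $A_i,B_i\in K[\vec z]$ with $A_i(\vec z)f(\vec z)=B_i(\vec z)f(\vec z+\vec e_i)$ for all $\vec z\in\mathbb Z^k$. $f$ is a zero divisor if there is a nonzero polynomial $p$ with $p(\vec z)f(\vec z)=0$ for all $\vec z$. *)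

From HB Require Import structures.
From mathcomp Require Import all_boot all_order all_algebra.
From mathcomp Require Import fraction.
From mathcomp.multinomials Require Import mpoly.
Set Implicit Arguments. Unset Strict Implicit. Unset Printing Implicit Defensive.
Import GRing.Theory.
Local Open Scope ring_scope.

Definition zvec (k : nat) := 'I_k -> int.

Definition zadd (k : nat) (z v : zvec k) : zvec k := fun i => z i + v i.
Definition unitv (k : nat) (i : 'I_k) : zvec k := fun j => (i == j)%:R.

Definition zeval (K : fieldType) (k : nat) (p : {mpoly K[k]}) (z : zvec k) : K :=
  p.@[fun i => (z i)%:~R].

(* the shift p^v (z) = p(z + v) *)
Definition mshift (K : fieldType) (k : nat) (v : zvec k) (p : {mpoly K[k]})
  : {mpoly K[k]} :=
  p \mPo [tuple 'X_i + ((v i)%:~R)%:MP | i < k].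

(* the shift of a rational function A/B: R^v = A^v / B^v *)
Definition ratfun (K : fieldType) (k : nat) := {fraction {mpoly K[k]}}.

Definition frac_of (K : fieldType) (k : nat) (A B : {mpoly K[k]}) : ratfun K k :=
  FracField.tofrac A / FracField.tofrac B.

Definition hypergeometric_term (K : fieldType) (k : nat) (f : zvec k -> K) : Prop :=
  forall i : 'I_k, exists A B : {mpoly K[k]},
    [/\ A != 0, B != 0 &
        forall z : zvec k, zeval A z * f z = zeval B z * f (zadd z (unitv i))].

Definition zero_divisor (K : fieldType) (k : nat) (f : zvec k -> K) : Prop :=
  exists p : {mpoly K[k]}, p != 0 /\ forall z : zvec k, zeval p z * f z = 0.

From HB Require Import structures.
From mathcomp Require Import all_boot all_order all_algebra.
From mathcomp Require Import fraction.
From mathcomp.multinomials Require Import mpoly.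
Local Open Scope ring_scope.
Import GRing.Theory.

(* If [p f = 0] with [p <> 0], then [p * p^v] annihilates both [f] and [f^v],
   so [A_v = B_v = p * p^v] works for every [v]; all the [R_v] are then [1]
   and the compatibility condition is trivial. *)

Lemma comp_mpolyA (R : comNzRingType) (n : nat) (p : {mpoly R[n]})
    (lq lr : n.-tuple {mpoly R[n]}) :
  p \mPo lq \mPo lr = p \mPo [tuple tnth lq i \mPo lr | i < n].
Proof.
rewrite (comp_mpolyE p lq) (comp_mpolyE p) raddf_sum /=; apply: eq_bigr => m _.
rewrite comp_mpolyZ rmorph_prod; congr (_ *: _); apply: eq_bigr => i _.
by rewrite rmorphXn tnth_map tnth_ord_tuple.
Qed.

Section Shift.

Variables (K : fieldType) (k : nat).
Implicit Types (v z : zvec k) (p : {mpoly K[k]}).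

Lemma mshiftK v : cancel (@mshift K k v) (mshift (fun i => - v i)).
Proof.
move=> p; rewrite /mshift comp_mpolyA -[RHS]comp_mpoly_id; congr comp_mpoly.
apply: eq_from_tnth => i; rewrite !tnth_map !tnth_ord_tuple.
rewrite comp_mpolyD comp_mpolyC comp_mpolyXU -tnth_nth tnth_map tnth_ord_tuple.
by rewrite -addrA -mpolyCD -intrD addNr mulr0z addr0.
Qed.

Lemma mshift_eq0 v p : (mshift v p == 0) = (p == 0).
Proof.
apply/eqP/eqP => [p_v0|->]; last by rewrite /mshift comp_mpoly0.
by rewrite -(mshiftK v p) p_v0 /mshift comp_mpoly0.
Qed.

Lemma zeval_mshift v p z : zeval (mshift v p) z = zeval p (zadd z v).
Proof.
rewrite /zeval /mshift comp_mpoly_meval; apply: meval_eq => i.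
by rewrite tnth_map tnth_ord_tuple mevalD mevalXU mevalC /zadd intrD.
Qed.

Lemma zevalM p q z : zeval (p * q) z = zeval p z * zeval q z.
Proof. exact: mevalM. Qed.

Lemma frac_of_id p : p != 0 -> frac_of p p = 1.
Proof. by move=> p_neq0; rewrite /frac_of divff // tofrac_eq0. Qed.

End Shift.

Section Annihilator.

Variables (K : fieldType) (k : nat) (f : zvec k -> K) (p : {mpoly K[k]}).
Hypothesis p_annihilates_f : forall z, zeval p z * f z = 0.

Lemma mul_mshift_annihilates v z : zeval (p * mshift v p) z * f z = 0.
Proof. by rewrite zevalM mulrAC p_annihilates_f mul0r. Qed.

Lemma mul_mshift_annihilates_shift v z :
  zeval (p * mshift v p) z * f (zadd z v) = 0.
Proof.
by rewrite zevalM zeval_mshift -mulrA p_annihilates_f mulr0.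
Qed.

End Annihilator.

Theorem propositionB8 (K : fieldType) (k : nat) (f : zvec k -> K) :
  hypergeometric_term f -> zero_divisor f ->
  exists A B : zvec k -> {mpoly K[k]},
    (forall v : zvec k,
        [/\ A v != 0, B v != 0 &
            forall z : zvec k, zeval (A v) z * f z = zeval (B v) z * f (zadd z v)]) /\
    (forall v w : zvec k,
        frac_of (A v) (B v) * frac_of (mshift v (A w)) (mshift v (B w)) =
        frac_of (A w) (B w) * frac_of (mshift w (A v)) (mshift w (B v))).
Proof.
move=> _ [p [p_neq0 pf0]].
have Pv_neq0 v : p * mshift v p != 0 by rewrite mulf_neq0 ?mshift_eq0.
exists (fun v => p * mshift v p), (fun v => p * mshift v p); split.
  move=> v; split=> // z.
  by rewrite mul_mshift_annihilates // mul_mshift_annihilates_shift.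
by move=> v w; rewrite !frac_of_id ?mshift_eq0.
Qed.
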